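(* Fix $k\in\mathbb{Z}_{\ge0}$ and $m\in\mathbb{Z}_{\ge0}$, let $S\subseteq(m,m+1)$, and let $r$ be a strongly rigid $S$-semi-metric on $\Omega$. Then: (1) $\Lambda^k_m[r](x,y)\in(\lambda^k_{\mu_m},\,2\lambda^k_{\mu_m})$ for all distinct $x,y\in\Omega$; (2) $\Lambda^k_m[r]$ is a metric on $\Omega$ and $\Lambda^k_m[r]\in\mathrm{Met}(\Omega)$; (3) the metric $\Lambda^k_m[r]$ is strongly rigid.
   Context: Fix a bijection $Q\colon\mathbb{Z}_{\ge0}\to\mathbb{Q}_{\ge0}$ with property (M): setting $\mu_m=\min Q^{-1}([m,m+1)\cap\mathbb{Q})$, we have $Q(\mu_m)=m$ and $\mu_m<\mu_{m+1}$ for all $m\in\mathbb{Z}_{\ge0}$. For a summable sequence $\alpha=(a_i)$ of positive reals and $B\subseteq\mathbb{Q}_{\ge0}$, $\langle\alpha,B\rangle=\sum_{i:\,Q(i)\in B}a_i$ ($=0$ if $B=\emptyset$). For $k\in\mathbb{Z}_{\ge0}$ let $F_k(n)=2^n+k$ and $\lambda^k=(\lambda^k_i)_{i\ge0}$ with $\lambda^k_i=2^{-F_k(i)}$. $\Omega$ is a discrete space of cardinality $\mathfrak{c}$. For $S\subseteq[0,\infty)$, an $S$-semi-metric on a set $Y$ is a map $r\colon Y\times Y\to[0,\infty)$ with $r(x,y)=r(y,x)$, $r(x,y)=0$ iff $x=y$, and $r(x,y)\in S$ for $x\neq y$ (no triangle inequality assumed); it (or a metric) is strongly rigid if $r(x,y)=r(u,v)\neq0$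 implies $\{x,y\}=\{u,v\}$. For $m\in\mathbb{Z}_{\ge0}$ and a semi-metric $r$ on $\Omega$ put $J(m,r(x,y))=[m,r(x,y))\cap\mathbb{Q}$ and $\Lambda^k_m[r](x,y)=\langle\lambda^k,J(m,r(x,y))\rangle$. $\mathrm{Met}(\Omega)$ is the set of metrics on $\Omega$ generating its (discrete) topology. *)

From HB Require Import structures.
From mathcomp Require Import all_boot all_order all_algebra.
From mathcomp Require Import all_classical all_reals all_analysis.
Set Implicit Arguments. Unset Strict Implicit. Unset Printing Implicit Defensive.
Import Order.TTheory GRing.Theory Num.Theory.
Local Open Scope classical_set_scope.
Local Open Scope ring_scope.

Definition enum_Qnonneg (Q : nat -> rat) : Prop :=
  injective Q /\ (forall q : rat, 0 <= q <-> exists i, Q i = q).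

Definition is_mu (Q : nat -> rat) (mu : nat -> nat) : Prop :=
  forall m : nat,
    ((m%:R <= Q (mu m)) && (Q (mu m) < m.+1%:R)) /\
    (forall i : nat, (m%:R <= Q i) && (Q i < m.+1%:R) -> (mu m <= i)%N).

Definition propM (Q : nat -> rat) (mu : nat -> nat) : Prop :=
  forall m : nat, Q (mu m) = m%:R /\ (mu m < mu m.+1)%N.

Definition pairing {R : realType} (Q : nat -> rat) (a : nat -> R) (B : set rat) : R :=
  limn (fun n => \sum_(i < n | Q i \in B) a i).

Definition Fk (k n : nat) : nat := (2 ^ n + k)%N.
Definition lambda {R : realType} (k : nat) (i : nat) : R := 2 ^- Fk k i.

Definition J {R : realType} (m : nat) (t : R) : set rat :=
  [set q : rat | (m%:R <= q) && (ratr q < t)].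

Definition Lambda {R : realType} {T : Type} (Q : nat -> rat) (k m : nat)
  (r : T -> T -> R) (x y : T) : R :=
  pairing Q (lambda k) (J m (r x y)).

Definition semi_metric {R : realType} {T : Type} (S : set R) (r : T -> T -> R) : Prop :=
  (forall x y, 0 <= r x y) /\
  (forall x y, r x y = r y x) /\
  (forall x y, r x y = 0 <-> x = y) /\
  (forall x y, x <> y -> S (r x y)).

Definition is_metric {R : realType} {T : Type} (d : T -> T -> R) : Prop :=
  (forall x y, 0 <= d x y) /\
  (forall x y, d x y = d y x) /\
  (forall x y, d x y = 0 <-> x = y) /\
  (forall x y z, d x z <= d x y + d y z).

Definition strongly_rigid {R : realType} {T : Type} (r : T -> T -> R) : Prop :=
  forall x y u v, r x y = r u v -> r x y <> 0 ->
    (x = u /\ y = v) \/ (x = v /\ y = u).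

(* Met(Omega) for discrete Omega: metrics whose metric topology is discrete,
   i.e. every singleton is open (every point is isolated). *)
Definition Met {R : realType} (T : Type) (d : T -> T -> R) : Prop :=
  is_metric d /\
  (forall A : set T, forall x, A x ->
     exists2 e : R, 0 < e & forall y, d x y < e -> A y).

(* Every strictly positive distance of [r] lies in [(m, m+1)], so [J m (r x y)]
   always contains [m = Q (mu m)] and misses every rational below [m]; hence
   [Lambda] exceeds [lambda_(mu m)] and, the weights decaying
   faster than geometrically, is at most [5/3 lambda_(mu m)].  All positive
   distances thus lie in [(c, 2c)] with [c = lambda_(mu m)], which forces the
   triangle inequality and discreteness.  Moreover [t |-> <lambda, J m t>] is
   strictly increasing on [(m, oo)] by density of the rationals, so equal
   [Lambda]-distances come from equal [r]-distances and rigidity transfers. *)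
From HB Require Import structures.
From mathcomp Require Import all_boot all_order all_algebra.
From mathcomp Require Import all_classical all_reals all_analysis.
From mathcomp Require Import zify lra.
Import Order.TTheory GRing.Theory Num.Theory.
Local Open Scope classical_set_scope.
Local Open Scope ring_scope.

Definition partial_pairing {R : realType} (Q : nat -> rat) (a : nat -> R)
    (B : set rat) (n : nat) :=
  \sum_(i < n | Q i \in B) a i.

Section RapidlyDecreasingWeights.
Context {R : realType} {Q : nat -> rat} {a : nat -> R}.
Hypothesis a_gt0 : forall i, 0 < a i.
Hypothesis a_halving : forall i, 2 * a i.+1 <= a i.
Hypothesis a_quartering : forall i, (0 < i)%N -> 4 * a i.+1 <= a i.

Lemma sum_tail_add_le s d : (0 < s)%N ->
  3 * \sum_(s <= i < s + d) a i + 4 * a (s + d) <= 4 * a s.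
Proof.
move=> s_gt0; elim: d => [|d IH]; first by rewrite addn0 big_geq // mulr0 add0r.
rewrite addnS big_nat_recr /= ?leq_addr //.
have := @a_quartering (s + d) (ltn_addr d s_gt0); lra.
Qed.

Lemma sum_tail_le s n : (0 < s)%N -> 3 * \sum_(s <= i < n) a i <= 4 * a s.
Proof.
move=> s_gt0; have [n_le_s|s_lt_n] := leqP n s.
  by rewrite big_geq // mulr0 mulr_ge0 // ltW.
rewrite -(subnKC (ltnW s_lt_n)).
have := @sum_tail_add_le s (n - s) s_gt0; have := a_gt0 (s + (n - s)); lra.
Qed.

Lemma sum_from_le j n : 3 * \sum_(j <= i < n) a i <= 5 * a j.
Proof.
have [j_lt_n|n_le_j] := ltnP j n; last by rewrite big_geq // mulr0 mulr_ge0 // ltW.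
rewrite big_ltn //; have := @sum_tail_le j.+1 n (ltn0Sn j); have := a_halving j; lra.
Qed.

Lemma partial_pairing_le_sum_from B j n : (forall i, Q i \in B -> (j <= i)%N) ->
  partial_pairing Q a B n <= \sum_(j <= i < n) a i.
Proof.
move=> B_ge_j; rewrite big_geq_mkord /partial_pairing !big_mkcond /= [leRHS]big_mkcond /=.
apply: ler_sum => i _; have [QiB|] := boolP (Q i \in B).
  by rewrite (B_ge_j _ QiB).
by case: ifP => // _ _; exact/ltW/a_gt0.
Qed.

Lemma partial_pairing_nondecreasing B : nondecreasing_seq (partial_pairing Q a B).
Proof.
apply/nondecreasing_seqP => n; rewrite /partial_pairing [leRHS]big_mkcond.
by rewrite big_ord_recr /= -big_mkcond lerDl; case: ifP => // _; exact/ltW/a_gt0.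
Qed.

Lemma partial_pairing_cvg B : cvgn (partial_pairing Q a B).
Proof.
apply: nondecreasing_is_cvgn; first exact: partial_pairing_nondecreasing.
exists (5 * a 0 / 3) => _ [n _ <-].
have := @partial_pairing_le_sum_from B 0 n (fun i _ => leq0n i).
have := sum_from_le 0 n; lra.
Qed.

Lemma partial_pairing_le B n : partial_pairing Q a B n <= pairing Q a B.
Proof.
exact: nondecreasing_cvgn_le (partial_pairing_nondecreasing B) (partial_pairing_cvg B) n.
Qed.

Lemma pairing_le_ub B c : (forall n, partial_pairing Q a B n <= c) -> pairing Q a B <= c.
Proof. by move=> ub; apply: limr_le; [exact: partial_pairing_cvg|exact: nearW]. Qed.

Lemma pairing_eq0 B : (forall i, Q i \notin B) -> pairing Q a B = 0.
Proof.
move=> QB0; rewrite /pairing (_ : (fun n => _) = cst 0) ?lim_cst //.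
by apply/funext => n; rewrite big_pred0 // => i; exact/negbTE.
Qed.

Lemma pairing_lt_twice B j : (forall i, Q i \in B -> (j <= i)%N) ->
  pairing Q a B < 2 * a j.
Proof.
move=> B_ge_j; apply: (@le_lt_trans _ _ (5 * a j / 3)); last by have := a_gt0 j; lra.
apply: pairing_le_ub => n; have := @partial_pairing_le_sum_from B j n B_ge_j.
have := sum_from_le j n; lra.
Qed.

Lemma partial_pairing_addpoint B1 B2 i n : (forall j, Q j \in B1 -> Q j \in B2) ->
  Q i \in B2 -> Q i \notin B1 -> (i < n)%N ->
  partial_pairing Q a B1 n + a i <= partial_pairing Q a B2 n.
Proof.
move=> B12 QiB2 QiB1 i_lt_n; rewrite /partial_pairing.
rewrite (bigID (fun j : 'I_n => Q j \in B1) (fun j : 'I_n => Q j \in B2)) /=.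
apply: lerD.
  rewrite le_eqVlt; apply/orP; left; apply/eqP; apply: eq_bigl => j.
  by have [/B12 ->|] := boolP (Q j \in B1); rewrite ?andbF ?andbT.
rewrite (bigD1 (Ordinal i_lt_n)) /= ?QiB2 ?QiB1 // lerDl.
by apply: sumr_ge0 => j _; exact/ltW/a_gt0.
Qed.

Lemma pairing_addpoint B1 B2 i : (forall j, Q j \in B1 -> Q j \in B2) ->
  Q i \in B2 -> Q i \notin B1 -> pairing Q a B1 + a i <= pairing Q a B2.
Proof.
move=> B12 QiB2 QiB1; rewrite -lerBrDr; apply: pairing_le_ub => n.
pose N := maxn n i.+1.
have := partial_pairing_nondecreasing B1 n N (leq_maxl n i.+1).
have := @partial_pairing_addpoint B1 B2 i N B12 QiB2 QiB1 (leq_maxr _ _).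
have := partial_pairing_le B2 N; lra.
Qed.

End RapidlyDecreasingWeights.

Section LambdaWeights.
Variables (R : realType) (k : nat).

Lemma lambda_gt0 i : 0 < lambda k i :> R.
Proof. by rewrite /lambda invr_gt0 exprn_gt0. Qed.

Lemma lambda_le_mul_pow i e : (Fk k i + e <= Fk k i.+1)%N ->
  2 ^+ e * lambda k i.+1 <= lambda k i :> R.
Proof.
move=> F_le; rewrite /lambda.
have -> : (2 : R) ^- Fk k i = 2 ^+ e * 2 ^- (Fk k i + e).
  by rewrite exprD invfM mulrCA mulfV ?mulr1 // expf_neq0.
rewrite ler_wpM2l ?exprn_ge0 // lef_pV2 ?posrE ?exprn_gt0 //.
by rewrite ler_eXn2l // ltr1n.
Qed.

Lemma lambda_halving i : 2 * lambda k i.+1 <= lambda k i :> R.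
Proof.
apply: (@lambda_le_mul_pow i 1).
by rewrite /Fk expnS; have := expn_gt0 2 i; lia.
Qed.

Lemma lambda_quartering i : (0 < i)%N -> 4 * lambda k i.+1 <= lambda k i :> R.
Proof.
move=> i_gt0; have -> : 4 = 2 ^+ 2 :> R by rewrite expr2 -natrM.
apply: (@lambda_le_mul_pow i 2); rewrite /Fk expnS.
have : (1 < 2 ^ i)%N by rewrite -{1}(expn0 2) ltn_exp2l.
lia.
Qed.

End LambdaWeights.

Section IntervalPairing.
Variables (R : realType) (Q : nat -> rat) (mu : nat -> nat) (k m : nat).
Hypothesis HQ : enum_Qnonneg Q.
Hypothesis Hmu : is_mu Q mu.
Hypothesis HM : propM Q mu.
Local Notation lam := (@lambda R k).

Let lam_gt0 := @lambda_gt0 R k.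
Let lam_halving := @lambda_halving R k.
Let lam_quartering := @lambda_quartering R k.

Lemma J_index_ge (t : R) i : t <= m.+1%:R -> Q i \in J m t -> (mu m <= i)%N.
Proof.
move=> t_le; rewrite in_setE /J /= => /andP[m_le_Qi Qi_lt_t].
apply: (proj2 (Hmu m)); rewrite m_le_Qi /=.
by rewrite -(ltr_rat R) ratr_nat (lt_le_trans Qi_lt_t t_le).
Qed.

Lemma exists_Q_between (x y : R) : 0 <= x -> x < y ->
  exists i, x < ratr (Q i) < y.
Proof.
move=> x_ge0 /rat_in_itvoo[q]; rewrite in_itv /= => /andP[x_lt_q q_lt_y].
have q_ge0 : 0 <= q by rewrite -(ler_rat R) rmorph0 (le_trans x_ge0) ?ltW.
have [i Qi] := (proj1 (proj2 HQ q)) q_ge0.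
by exists i; rewrite Qi x_lt_q q_lt_y.
Qed.

Lemma pairing_J_eq0 (t : R) : t <= m%:R -> pairing Q lam (J m t) = 0.
Proof.
move=> t_le_m; apply: pairing_eq0 => i; apply/negP.
rewrite in_setE /J /= -(ler_rat R) ratr_nat => /andP[m_le_Qi Qi_lt_t].
by have := lt_le_trans (le_lt_trans m_le_Qi Qi_lt_t) t_le_m; rewrite ltxx.
Qed.

Lemma pairing_J_lt (t : R) : t <= m.+1%:R ->
  pairing Q lam (J m t) < 2 * lam (mu m).
Proof.
move=> t_le; apply: (pairing_lt_twice lam_gt0 lam_halving lam_quartering).
by move=> i; apply: J_index_ge.
Qed.

Lemma pairing_J_gt (t : R) : m%:R < t -> lam (mu m) < pairing Q lam (J m t).
Proof.
move=> m_lt_t.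
have [i /andP[m_lt_Qi Qi_lt_t]] := @exists_Q_between m%:R t (ler0n _ m) m_lt_t.
have Qi_neq_m : Q i != m%:R by apply: contraTneq m_lt_Qi => ->; rewrite ratr_nat ltxx.
have m_in_J : forall j, Q j \in [set m%:R] -> Q j \in J m t.
  by move=> j; rewrite !in_setE /J /= => ->; rewrite lexx ratr_nat m_lt_t.
have lam_mu_le : 0 + lam (mu m) <= pairing Q lam [set m%:R].
  rewrite -(@pairing_eq0 _ Q lam set0) => [|j]; last by rewrite in_set0.
  apply: pairing_addpoint => // [j||]; rewrite ?in_set0 //.
  by rewrite in_setE /= (proj1 (HM m)).
have : pairing Q lam [set m%:R] + lam i <= pairing Q lam (J m t).
  apply: pairing_addpoint => //; last by apply/negP; rewrite in_setE; exact/eqP.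
  by rewrite in_setE /J /= -(ler_rat R) ratr_nat Qi_lt_t (ltW m_lt_Qi).
have := lam_gt0 i; lra.
Qed.

Lemma pairing_J_homo_lt :
  {in `]m%:R : R, +oo[ &, {homo (fun t => pairing Q lam (J m t)) : s t / s < t}}.
Proof.
move=> t1 t2; rewrite !in_itv /= !andbT => m_lt_t1 _ t1_lt_t2.
have t1_ge0 : 0 <= t1 by rewrite (le_trans (ler0n _ m)) ?ltW.
have [i /andP[t1_lt_Qi Qi_lt_t2]] := @exists_Q_between t1 t2 t1_ge0 t1_lt_t2.
have : pairing Q lam (J m t1) + lam i <= pairing Q lam (J m t2).
  apply: pairing_addpoint => //.
  - move=> j; rewrite !in_setE /J /= => /andP[-> Qj_lt_t1].
    exact: lt_trans t1_lt_t2.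
  - rewrite in_setE /J /= Qi_lt_t2 andbT -(ler_rat R) ratr_nat.
    by rewrite ltW // (lt_trans m_lt_t1).
  - by apply/negP; rewrite in_setE /J /= => /andP[_]; rewrite ltNge ltW.
have := lam_gt0 i; lra.
Qed.

End IntervalPairing.

Section DiscreteMetrics.
Context {R : realType} {T : Type}.

(* Any two positive distances in [(c, 2c)] add up to more than a third one. *)
Lemma metric_Met_of_dist_itv (d : T -> T -> R) (c : R) : 0 < c ->
  (forall x y, d x y = d y x) -> (forall x, d x x = 0) ->
  (forall x y, x <> y -> c < d x y < 2 * c) -> is_metric d /\ Met d.
Proof.
move=> c_gt0 d_sym d_xx d_itv.
have d_gt_c x y : x <> y -> c < d x y by move=> /d_itv /andP[].
have d_ge0 x y : 0 <= d x y.
  by have [->|/d_gt_c] := pselect (x = y); [rewrite d_xx | move=> ?; lra].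
have d_eq0 x y : d x y = 0 <-> x = y.
  split=> [dxy0|->//]; apply: contrapT => /d_gt_c; rewrite dxy0; lra.
have d_metric : is_metric d.
  split=> //; split=> //; split=> // x y z.
  have [->|xy] := pselect (x = y); first by rewrite d_xx add0r.
  have [->|yz] := pselect (y = z); first by rewrite d_xx addr0.
  have [->|xz] := pselect (x = z); first by rewrite d_xx addr_ge0.
  have /andP[_] := d_itv _ _ xz; have := d_gt_c _ _ xy; have := d_gt_c _ _ yz; lra.
split=> //; split=> // A x Ax.
exists c => // y dxy_lt_c; have [<-//|/d_gt_c] := pselect (x = y); lra.
Qed.

Lemma strongly_rigid_comp (D : {pred R}) (f : R -> R) (r : T -> T -> R) :
  {in D &, injective f} -> (forall x y, x <> y -> r x y \in D) ->
  (forall x, f (r x x) = 0) -> (forall x y, r x y = 0 -> x = y) ->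
  strongly_rigid r -> strongly_rigid (fun x y => f (r x y)).
Proof.
move=> f_inj r_in_D f_rxx0 r_eq0 r_rigid x y u v frxy_eq frxy_neq0.
have neq_of_f_neq0 s t : f (r s t) <> 0 -> s <> t by move=> + st; rewrite st f_rxx0.
have xy := neq_of_f_neq0 _ _ frxy_neq0.
have uv : u <> v by apply: neq_of_f_neq0; rewrite -frxy_eq.
apply: r_rigid; first exact: f_inj (r_in_D _ _ xy) (r_in_D _ _ uv) frxy_eq.
by move=> /r_eq0.
Qed.

End DiscreteMetrics.

Theorem lemma4p9 (R : realType) (Q : nat -> rat) (mu : nat -> nat)
  (HQ : enum_Qnonneg Q) (Hmu : is_mu Q mu) (HM : propM Q mu)
  (Omega : Type) (HOmega : ([set: Omega] #= [set: R])%card)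
  (k m : nat) (S : set R) (HS : S `<=` `]m%:R, m.+1%:R[)
  (r : Omega -> Omega -> R) (Hr : semi_metric S r) (Hrig : strongly_rigid r) :
  (forall x y : Omega, x <> y ->
     lambda k (mu m) < Lambda Q k m r x y < 2 * lambda k (mu m)) /\
  (is_metric (Lambda Q k m r) /\ Met (Lambda Q k m r)) /\
  strongly_rigid (Lambda Q k m r).
Proof.
have [_ [r_sym [r_eq0 r_in_S]]] := Hr.
have r_itv x y : x <> y -> r x y \in `]m%:R, m.+1%:R[ by move=> /r_in_S /HS.
have Lambda_itv x y : x <> y ->
    lambda k (mu m) < Lambda Q k m r x y < 2 * lambda k (mu m).
  move=> /r_itv; rewrite in_itv /= => /andP[m_lt_r r_lt_m1].
  by rewrite pairing_J_gt // pairing_J_lt // ltW.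
have Lambda_xx x : Lambda Q k m r x x = 0.
  by rewrite /Lambda (proj2 (r_eq0 x x) erefl) pairing_J_eq0.
split=> //; split.
  apply: metric_Met_of_dist_itv (lambda_gt0 R k (mu m)) _ Lambda_xx Lambda_itv.
  by move=> x y; rewrite /Lambda r_sym.
have pairing_J_inj := inc_inj_in (le_mono_in (@pairing_J_homo_lt R Q k m HQ)).
apply: (@strongly_rigid_comp _ _ _ _ r pairing_J_inj) => // [x y xy|x y /r_eq0 //].
by have := r_itv x y xy; rewrite !in_itv /= => /andP[-> _].
Qed.
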